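(* Let $\|\cdot\|_c$ and $\|\cdot\|_s$ be norms on $\mathbb{R}^d$, let $f(x)=\frac12\|x\|_c^2$, and suppose $g(x)=\frac12\|x\|_s^2$ is $L$-smooth with respect to $\|\cdot\|_s$. Let $\ell_{cs}\in(0,1]$ and $u_{cs}\in[1,\infty)$ satisfy $\ell_{cs}\|x\|_c\le\|x\|_s\le u_{cs}\|x\|_c$ for all $x$. For $\mu>0$ define $M(x)=\min_{u\in\mathbb{R}^d}\{f(u)+\frac1\mu g(x-u)\}$. Then: (1) $M$ is convex and $L/\mu$-smooth with respect to $\|\cdot\|_s$; (2) for all $x\in\mathbb{R}^d$, $(1+\mu/u_{cs}^2)M(x)\le f(x)\le(1+\mu/\ell_{cs}^2)M(x)$; (3) there exists a norm $\|\cdot\|_M$ on $\mathbb{R}^d$ such that $M(x)=\frac12\|x\|_M^2$ for all $x$.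
   Context: A convex differentiable function $h:\mathbb{R}^d\to\mathbb{R}$ is $L$-smooth with respect to a norm $\|\cdot\|$ if $h(y)\le h(x)+\langle\nabla h(x),y-x\rangle+\frac L2\|x-y\|^2$ for all $x,y\in\mathbb{R}^d$, where $\langle x,y\rangle=x^\top y$. The function $M$ is the generalized Moreau envelope of $f$ with respect to $g$ (the minimum is attained). *)

From mathcomp Require Import ssreflect ssrfun ssrbool eqtype ssrnat seq fintype bigop.
From Stdlib Require Import Reals.
Local Open Scope R_scope.

Definition vec (d : nat) := 'I_d -> R.

Definition vadd {d} (x y : vec d) : vec d := fun i => x i + y i.
Definition vsub {d} (x y : vec d) : vec d := fun i => x i - y i.
Definition vscale {d} (a : R) (x : vec d) : vec d := fun i => a * x i.
Definition vzero {d} : vec d := fun _ => 0.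

Definition inner {d} (x y : vec d) : R := \big[Rplus/0]_(i < d) (x i * y i).

(* Euclidean norm, used only to define (Frechet) differentiability;
   in finite dimension the choice of norm is irrelevant. *)
Definition eucl {d} (x : vec d) : R := sqrt (inner x x).

Definition is_norm {d} (N : vec d -> R) : Prop :=
  (forall x, 0 <= N x) /\
  (forall x, N x = 0 -> forall i, x i = 0) /\
  (forall a x, N (vscale a x) = Rabs a * N x) /\
  (forall x y, N (vadd x y) <= N x + N y).

Definition convex {d} (h : vec d -> R) : Prop :=
  forall x y t, 0 <= t <= 1 ->
    h (vadd (vscale t x) (vscale (1 - t) y)) <= t * h x + (1 - t) * h y.

Definition is_gradient {d} (h : vec d -> R) (G : vec d -> vec d) : Prop :=
  forall x eps, 0 < eps -> exists delta, 0 < delta /\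
    forall v, eucl v < delta ->
      Rabs (h (vadd x v) - h x - inner (G x) v) <= eps * eucl v.

Definition differentiable {d} (h : vec d -> R) : Prop :=
  exists G, is_gradient h G.

Definition L_smooth {d} (h : vec d -> R) (L : R) (N : vec d -> R) : Prop :=
  convex h /\
  exists G, is_gradient h G /\
    forall x y, h y <= h x + inner (G x) (vsub y x) + L / 2 * (N (vsub x y))^2.

Definition is_moreau_env {d} (f g : vec d -> R) (mu : R) (M : vec d -> R) : Prop :=
  forall x,
    (exists u, M x = f u + / mu * g (vsub x u)) /\
    (forall u, M x <= f u + / mu * g (vsub x u)).

(** The envelope is the infimal convolution of two convex, 2-homogeneous
    functions, so it is convex, 2-homogeneous and definite; hence its gauge
    [sqrt (2 M)] is a norm.  Evaluating the infimum at [u = x / (1 + mu/ucs^2)]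
    gives the first sandwich inequality, and the weighted Cauchy-Schwarz bound
    [(a + b)^2 <= (1 + k) (a^2 + b^2/k)] gives the second.  For smoothness,
    freezing the minimizer [u x] of the envelope at [x] shows that [M] lies
    below [fun y => f (u x) + g (y - u x) / mu], which is [L/mu]-smooth; a convex
    function squeezed under such a quadratic model at every point is
    differentiable with the model's slope as gradient. *)
From mathcomp Require Import ssreflect ssrfun ssrbool eqtype ssrnat seq fintype bigop.
From Stdlib Require Import Reals Lra FunctionalExtensionality ClassicalEpsilon.
Local Open Scope R_scope.
Set Implicit Arguments.
Unset Strict Implicit.

Ltac vec_ext :=
  let i := fresh "i" in
  apply: functional_extensionality => i; unfold vadd, vsub, vscale, vzero.

Lemma inner_scale_l d a (x y : vec d) : inner (vscale a x) y = a * inner x y.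
Proof.
rewrite /inner; apply: (big_rec2 (fun u v => u = a * v)); first by ring.
by move=> i y1 y2 _ ->; rewrite /vscale; ring.
Qed.

Lemma inner_opp_r d (x y : vec d) : inner x (vscale (-1) y) = - inner x y.
Proof.
rewrite /inner; apply: (big_rec2 (fun u v => u = - v)); first by ring.
by move=> i y1 y2 _ ->; rewrite /vscale; ring.
Qed.

Lemma eucl_opp d (x : vec d) : eucl (vscale (-1) x) = eucl x.
Proof. by rewrite /eucl /inner; f_equal; apply: eq_bigr => i _; rewrite /vscale; ring. Qed.

Lemma eucl_ge0 d (x : vec d) : 0 <= eucl x.
Proof. exact: sqrt_pos. Qed.

Lemma sq_add_le_weighted a b k : 0 < k -> (a + b) ^ 2 <= (1 + k) * (a ^ 2 + b ^ 2 / k).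
Proof.
move=> hk.
have -> : (1 + k) * (a ^ 2 + b ^ 2 / k) = (a + b) ^ 2 + (k * a - b) ^ 2 / k by field; lra.
have : 0 <= (k * a - b) ^ 2 / k.
  by apply: Rmult_le_pos; [apply: pow2_ge_0 | apply/Rlt_le/Rinv_0_lt_compat].
lra.
Qed.

Section NormFacts.

Variables (d : nat) (N : vec d -> R).
Hypothesis hN : is_norm N.

Lemma norm_ge0 x : 0 <= N x.
Proof. by case: hN. Qed.

Lemma norm_scale a x : N (vscale a x) = Rabs a * N x.
Proof. by case: hN => _ [_ []]. Qed.

Lemma norm_triangle x y : N (vadd x y) <= N x + N y.
Proof. by case: hN => _ [_ [_]]. Qed.

Lemma norm_eq0 x : N x = 0 -> forall i, x i = 0.
Proof. by case: hN => _ [N_def _]; apply: N_def. Qed.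

Lemma norm_opp x : N (vscale (-1) x) = N x.
Proof. by rewrite norm_scale Rabs_Ropp Rabs_R1; ring. Qed.

Lemma norm_zero : N vzero = 0.
Proof.
have -> : (vzero : vec d) = vscale 0 vzero by vec_ext; ring.
by rewrite norm_scale Rabs_R0; ring.
Qed.

Lemma half_sq_norm_scale a x : / 2 * N (vscale a x) ^ 2 = a ^ 2 * (/ 2 * N x ^ 2).
Proof. by rewrite norm_scale Rpow_mult_distr pow2_abs; ring. Qed.

Lemma half_sq_norm_convex : convex (fun x => / 2 * N x ^ 2).
Proof.
rewrite /convex => x y t ht.
have htri := norm_triangle (vscale t x) (vscale (1 - t) y).
rewrite !norm_scale !Rabs_pos_eq in htri; try lra.
have := norm_ge0 (vadd (vscale t x) (vscale (1 - t) y)).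
have := norm_ge0 x; have := norm_ge0 y.
set c := N (vadd _ _) in htri *; set a := N x in htri *; set b := N y in htri *.
move=> hb ha hc.
have hc2 : c ^ 2 <= (t * a + (1 - t) * b) ^ 2 by apply: pow_incr; nra.
(* the gap in Jensen's inequality for the square *)
have : 0 <= t * (1 - t) * (a - b) ^ 2.
  by apply: Rmult_le_pos; [apply: Rmult_le_pos; lra | apply: pow2_ge_0].
nra.
Qed.

End NormFacts.

Lemma sq_homogeneous_of_le d (h : vec d -> R) :
  (forall x, 0 <= h x) -> (forall a x, h (vscale a x) <= a ^ 2 * h x) ->
  forall a x, h (vscale a x) = a ^ 2 * h x.
Proof.
move=> h_ge0 h_le a x.
have [->|a_neq0] := Req_dec a 0.
  by have := h_le 0 x; have := h_ge0 (vscale 0 x); lra.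
apply: Rle_antisym; first exact: h_le.
have inv_scale : vscale (/ a) (vscale a x) = x by vec_ext; field.
have hinv := h_le (/ a) (vscale a x); rewrite inv_scale in hinv.
have -> : h (vscale a x) = a ^ 2 * ((/ a) ^ 2 * h (vscale a x)) by field.
by apply: Rmult_le_compat_l; [apply: pow2_ge_0 | exact: hinv].
Qed.

Section QuadraticGauge.

Variables (d : nat) (h : vec d -> R).
Hypotheses (h_ge0 : forall x, 0 <= h x) (h_convex : convex h)
  (h_scale : forall a x, h (vscale a x) = a ^ 2 * h x)
  (h_definite : forall x, h x = 0 -> forall i, x i = 0).

Definition gauge (x : vec d) : R := sqrt (2 * h x).

Lemma half_sq_gauge x : h x = / 2 * gauge x ^ 2.
Proof. by rewrite /gauge pow2_sqrt; [field | have := h_ge0 x; lra]. Qed.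

Lemma gauge_ge0 x : 0 <= gauge x.
Proof. exact: sqrt_pos. Qed.

Lemma gauge_le x r : 0 <= r -> h x <= / 2 * r ^ 2 -> gauge x <= r.
Proof.
move=> r_ge0 hx; rewrite -(sqrt_pow2 r) //.
by apply: sqrt_le_1_alt; lra.
Qed.

Lemma gauge_eq0 x : gauge x = 0 -> forall i, x i = 0.
Proof. by move=> g0; apply: h_definite; rewrite half_sq_gauge g0; ring. Qed.

Lemma gauge_scale a x : gauge (vscale a x) = Rabs a * gauge x.
Proof.
rewrite /gauge h_scale.
have -> : 2 * (a ^ 2 * h x) = a ^ 2 * (2 * h x) by ring.
rewrite sqrt_mult; [| apply: pow2_ge_0 | have := h_ge0 x; lra].
by rewrite -Rsqr_pow2 sqrt_Rsqr_abs.
Qed.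

Lemma gauge_triangle x y : gauge (vadd x y) <= gauge x + gauge y.
Proof.
have [px0|px] := Req_dec (gauge x) 0.
  have -> : vadd x y = y by vec_ext; rewrite (@gauge_eq0 x px0); ring.
  by rewrite px0; lra.
have [qy0|qy] := Req_dec (gauge y) 0.
  have -> : vadd x y = x by vec_ext; rewrite (@gauge_eq0 y qy0); ring.
  by rewrite qy0; lra.
have := gauge_ge0 x; have := gauge_ge0 y.
set p := gauge x in px *; set q := gauge y in qy *; move=> q_ge0 p_ge0.
(* [x / p] and [y / q] lie on the unit sphere; [(x + y) / (p + q)] is a convex
   combination of them *)
have hxp : h (vscale (/ p) x) = / 2 by rewrite h_scale half_sq_gauge -/p; field.
have hyq : h (vscale (/ q) y) = / 2 by rewrite h_scale half_sq_gauge -/q; field.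
have ht : 0 <= p / (p + q) <= 1.
  have : p / (p + q) + q / (p + q) = 1 by field; lra.
  have : 0 <= q / (p + q) by apply: Rmult_le_pos; [lra | apply/Rlt_le/Rinv_0_lt_compat; lra].
  have : 0 <= p / (p + q) by apply: Rmult_le_pos; [lra | apply/Rlt_le/Rinv_0_lt_compat; lra].
  lra.
have comb : vadd (vscale (p / (p + q)) (vscale (/ p) x))
              (vscale (1 - p / (p + q)) (vscale (/ q) y))
            = vscale (/ (p + q)) (vadd x y) by vec_ext; field; lra.
have hconv := h_convex (vscale (/ p) x) (vscale (/ q) y) ht.
rewrite comb hxp hyq h_scale in hconv.
apply: gauge_le; first lra.
have -> : h (vadd x y) = (p + q) ^ 2 * ((/ (p + q)) ^ 2 * h (vadd x y)) by field; lra.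
have -> : / 2 * (p + q) ^ 2 = (p + q) ^ 2 * (p / (p + q) * / 2 + (1 - p / (p + q)) * / 2)
  by field; lra.
by apply: Rmult_le_compat_l; [apply: pow2_ge_0 | exact: hconv].
Qed.

Lemma is_norm_gauge : is_norm gauge.
Proof. by do !split; [exact: gauge_ge0 | exact: gauge_eq0 | exact: gauge_scale | exact: gauge_triangle]. Qed.

End QuadraticGauge.

Definition is_littleo d (q : vec d -> R) : Prop :=
  forall eps, 0 < eps -> exists delta, 0 < delta /\
    forall v, eucl v < delta -> Rabs (q v) <= eps * eucl v.

Lemma littleo_scale d c (q : vec d -> R) : is_littleo q -> is_littleo (fun v => c * q v).
Proof.
move=> qo eps eps_gt0.
have c1_gt0 : 0 < Rabs c + 1 by have := Rabs_pos c; lra.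
set k := eps / (Rabs c + 1).
have [|delta [delta_gt0 hq]] := qo k; first by apply: Rdiv_lt_0_compat.
exists delta; split=> // v hv.
have := hq v hv; have := Rabs_pos (q v); have := Rabs_pos c; have := eucl_ge0 v.
have -> : eps = k * (Rabs c + 1) by rewrite /k; field; lra.
rewrite Rabs_mult; have : 0 < k by apply: Rdiv_lt_0_compat.
nra.
Qed.

(* Evenness cancels the linear term: adding the first-order expansions at [v]
   and [-v] around [0] leaves [2 g v]. *)
Lemma littleo_of_even_gradient d (g : vec d -> R) (G : vec d -> vec d) :
  is_gradient g G -> g vzero = 0 -> (forall v, g (vscale (-1) v) = g v) ->
  (forall v, 0 <= g v) -> is_littleo g.
Proof.
move=> hG g0 g_even g_ge0 eps eps_gt0.
have [delta [delta_gt0 hdelta]] := hG vzero eps eps_gt0.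
exists delta; split=> // v hv.
have hv' : eucl (vscale (-1) v) < delta by rewrite eucl_opp.
have add0 w : vadd vzero w = w by vec_ext; ring.
have hplus := hdelta v hv; have hminus := hdelta _ hv'.
rewrite add0 g0 in hplus; rewrite add0 eucl_opp inner_opp_r g_even g0 in hminus.
have := Rle_abs (g v - 0 - inner (G vzero) v).
have := Rle_abs (g v - 0 - - inner (G vzero) v).
by rewrite (Rabs_pos_eq (g v)) //; lra.
Qed.

(* Convexity at the midpoint of [x + v] and [x - v] turns the upper bound at
   [x - v] into the matching lower bound at [x + v]. *)
Lemma gradient_of_convex_upper_model d (h q : vec d -> R) (G : vec d -> vec d) :
  convex h ->
  (forall x y, h y <= h x + inner (G x) (vsub y x) + q (vsub x y)) ->
  (forall v, q (vscale (-1) v) = q v) -> is_littleo q -> is_gradient h G.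
Proof.
move=> h_convex h_model q_even qo x eps eps_gt0.
have [delta [delta_gt0 hq]] := qo eps eps_gt0.
exists delta; split=> // v hv.
have e1 : vsub (vadd x v) x = v by vec_ext; ring.
have e2 : vsub x (vadd x v) = vscale (-1) v by vec_ext; ring.
have e3 : vsub (vsub x v) x = vscale (-1) v by vec_ext; ring.
have e4 : vsub x (vsub x v) = v by vec_ext; ring.
have e5 : vadd (vscale (/ 2) (vadd x v)) (vscale (1 - / 2) (vsub x v)) = x.
  by vec_ext; field.
have up_plus := h_model x (vadd x v); rewrite e1 e2 q_even in up_plus.
have up_minus := h_model x (vsub x v); rewrite e3 e4 inner_opp_r in up_minus.
have mid := h_convex (vadd x v) (vsub x v) (/ 2) ltac:(lra); rewrite e5 in mid.
have := hq v hv; have := Rle_abs (q v).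
by move=> ? ?; apply: Rabs_le; lra.
Qed.

Section MoreauEnvelope.

Variables (d : nat) (Nc Ns : vec d -> R) (mu : R) (f g M : vec d -> R).
Hypotheses (hNc : is_norm Nc) (hNs : is_norm Ns)
  (hf : forall x, f x = / 2 * Nc x ^ 2) (hg : forall x, g x = / 2 * Ns x ^ 2)
  (hmu : 0 < mu) (hM : is_moreau_env f g mu M).

Lemma moreau_le x u : M x <= f u + / mu * g (vsub x u).
Proof. exact: (proj2 (hM x)). Qed.

Lemma moreau_attained x : exists u, M x = f u + / mu * g (vsub x u).
Proof. exact: (proj1 (hM x)). Qed.

Lemma f_ge0 x : 0 <= f x.
Proof. by rewrite hf; have := pow2_ge_0 (Nc x); lra. Qed.

Lemma g_ge0 x : 0 <= g x.
Proof. by rewrite hg; have := pow2_ge_0 (Ns x); lra. Qed.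

Lemma moreau_ge0 x : 0 <= M x.
Proof.
have [u ->] := moreau_attained x.
have := f_ge0 u; have := g_ge0 (vsub x u); have := Rinv_0_lt_compat _ hmu.
nra.
Qed.

Lemma moreau_definite x : M x = 0 -> forall i, x i = 0.
Proof.
have [u ->] := moreau_attained x => hsum i.
have := f_ge0 u; have := g_ge0 (vsub x u); have := Rinv_0_lt_compat _ hmu.
move=> hmu' hg0 hf0.
have fu0 : f u = 0 by nra.
have gxu0 : g (vsub x u) = 0 by nra.
have ui0 : u i = 0.
  by apply: (norm_eq0 hNc); rewrite hf in fu0; nra.
have : Ns (vsub x u) = 0 by rewrite hg in gxu0; nra.
move/(norm_eq0 hNs)/(_ i); rewrite /vsub ui0; lra.
Qed.

Lemma f_scale a x : f (vscale a x) = a ^ 2 * f x.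
Proof. by rewrite !hf half_sq_norm_scale. Qed.

Lemma g_scale a x : g (vscale a x) = a ^ 2 * g x.
Proof. by rewrite !hg half_sq_norm_scale. Qed.

Lemma moreau_scale a x : M (vscale a x) = a ^ 2 * M x.
Proof.
apply: sq_homogeneous_of_le; first exact: moreau_ge0.
move=> {}a {}x; have [u ->] := moreau_attained x.
have e : vsub (vscale a x) (vscale a u) = vscale a (vsub x u) by vec_ext; ring.
have := moreau_le (vscale a x) (vscale a u).
by rewrite e f_scale g_scale; lra.
Qed.

(* The pair of convex combinations of the minimizers at [x] and [y] is
   admissible at the convex combination of [x] and [y]. *)
Lemma moreau_convex : convex M.
Proof.
move=> x y t ht.
have [ux ->] := moreau_attained x; have [uy ->] := moreau_attained y.
have e : vsub (vadd (vscale t x) (vscale (1 - t) y)) (vadd (vscale t ux) (vscale (1 - t) uy))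
         = vadd (vscale t (vsub x ux)) (vscale (1 - t) (vsub y uy)) by vec_ext; ring.
have := moreau_le (vadd (vscale t x) (vscale (1 - t) y)) (vadd (vscale t ux) (vscale (1 - t) uy)).
rewrite e !hf !hg.
have := half_sq_norm_convex hNc ux uy ht.
have := half_sq_norm_convex hNs (vsub x ux) (vsub y uy) ht.
have := Rinv_0_lt_compat _ hmu.
set gxy := / 2 * Ns (vadd _ _) ^ 2; set gx := / 2 * Ns (vsub x ux) ^ 2.
set gy := / 2 * Ns (vsub y uy) ^ 2.
move=> imu hgc hfc hM'.
have : / mu * gxy <= / mu * (t * gx + (1 - t) * gy) by apply: Rmult_le_compat_l; lra.
lra.
Qed.

Lemma f_le_moreau lcs : 0 < lcs -> (forall x, lcs * Nc x <= Ns x) ->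
  forall x, f x <= (1 + mu / lcs ^ 2) * M x.
Proof.
move=> lcs_gt0 hlcs x; have [u ->] := moreau_attained x; rewrite !hf hg.
have htri : Nc x <= Nc u + Nc (vsub x u).
  have e : vadd u (vsub x u) = x by vec_ext; ring.
  by have := norm_triangle hNc u (vsub x u); rewrite e.
have := hlcs (vsub x u); have := norm_ge0 hNc x; have := norm_ge0 hNc (vsub x u).
set a := Nc u in htri *; set b := Nc (vsub x u) in htri *.
set s := Ns (vsub x u); set c := Nc x in htri *.
move=> b_ge0 c_ge0 hb.
set k := mu / lcs ^ 2.
have k_gt0 : 0 < k by apply: Rdiv_lt_0_compat => //; apply: pow_lt.
have hc2 : c ^ 2 <= (a + b) ^ 2 by apply: pow_incr; lra.
have hb2 : b ^ 2 / k <= s ^ 2 / mu.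
  have -> : b ^ 2 / k = (lcs * b) ^ 2 / mu by rewrite /k; field; lra.
  apply: Rmult_le_compat_r; first by apply/Rlt_le/Rinv_0_lt_compat.
  by apply: pow_incr; split; [apply: Rmult_le_pos; lra | exact: hb].
have hcs := sq_add_le_weighted a b k_gt0.
have : (1 + k) * (a ^ 2 + b ^ 2 / k) <= (1 + k) * (a ^ 2 + s ^ 2 / mu).
  by apply: Rmult_le_compat_l; lra.
have -> : (1 + k) * (/ 2 * a ^ 2 + / mu * (/ 2 * s ^ 2)) = / 2 * ((1 + k) * (a ^ 2 + s ^ 2 / mu)).
  by field; lra.
lra.
Qed.

Lemma moreau_le_f ucs : 0 < ucs -> (forall x, Ns x <= ucs * Nc x) ->
  forall x, (1 + mu / ucs ^ 2) * M x <= f x.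
Proof.
move=> ucs_gt0 hucs x.
set k := mu / ucs ^ 2; set t := / (1 + k).
have k_gt0 : 0 < k by apply: Rdiv_lt_0_compat => //; apply: pow_lt.
have gx : g x <= ucs ^ 2 * f x.
  rewrite hf hg; have := norm_ge0 hNs x.
  have : Ns x ^ 2 <= (ucs * Nc x) ^ 2 by apply: pow_incr; split; [exact: norm_ge0 | exact: hucs].
  by rewrite Rpow_mult_distr; lra.
have e : vsub x (vscale t x) = vscale (1 - t) x by vec_ext; ring.
have hMx := moreau_le x (vscale t x); rewrite e f_scale g_scale in hMx.
have hgk : / mu * g x <= / k * f x.
  have -> : / k * f x = / mu * (ucs ^ 2 * f x) by rewrite /k; field; split; lra.
  by apply: Rmult_le_compat_l; first by apply/Rlt_le/Rinv_0_lt_compat.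
have Mx_le : M x <= t * f x.
  have -> : t * f x = t ^ 2 * f x + (1 - t) ^ 2 * (/ k * f x) by rewrite /t; field; lra.
  have := pow2_ge_0 (1 - t).
  nra.
have -> : f x = (1 + k) * (t * f x) by rewrite /t; field; lra.
by apply: Rmult_le_compat_l; lra.
Qed.

Definition moreau_argmin (x : vec d) : vec d :=
  proj1_sig (constructive_indefinite_description _ (moreau_attained x)).

Lemma moreau_argminE x : M x = f (moreau_argmin x) + / mu * g (vsub x (moreau_argmin x)).
Proof. exact: (proj2_sig (constructive_indefinite_description _ (moreau_attained x))). Qed.

Lemma moreau_upper_model L (Gg : vec d -> vec d) :
  (forall x y, g y <= g x + inner (Gg x) (vsub y x) + L / 2 * Ns (vsub x y) ^ 2) ->
  forall x y, M y <= M x + inner (vscale (/ mu) (Gg (vsub x (moreau_argmin x)))) (vsub y x)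
                     + L / mu / 2 * Ns (vsub x y) ^ 2.
Proof.
move=> g_model x y; set u := moreau_argmin x.
have e1 : vsub (vsub y u) (vsub x u) = vsub y x by vec_ext; ring.
have e2 : vsub (vsub x u) (vsub y u) = vsub x y by vec_ext; ring.
have hg_xy := g_model (vsub x u) (vsub y u); rewrite e1 e2 in hg_xy.
have := Rmult_le_compat_l _ _ _ (Rlt_le _ _ (Rinv_0_lt_compat _ hmu)) hg_xy.
rewrite !Rmult_plus_distr_l.
have := moreau_le y u.
rewrite (moreau_argminE x) -/u inner_scale_l.
have -> : L / mu / 2 * Ns (vsub x y) ^ 2 = / mu * (L / 2 * Ns (vsub x y) ^ 2) by field; lra.
lra.
Qed.

End MoreauEnvelope.

Theorem lemma1 (d : nat) (Nc Ns : vec d -> R) (L lcs ucs mu : R)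
  (f g M : vec d -> R)
  (hNc : is_norm Nc) (hNs : is_norm Ns)
  (hf : forall x, f x = / 2 * (Nc x)^2)
  (hg : forall x, g x = / 2 * (Ns x)^2)
  (hgL : L_smooth g L Ns)
  (hl : 0 < lcs <= 1) (hu : 1 <= ucs)
  (hcs : forall x, lcs * Nc x <= Ns x /\ Ns x <= ucs * Nc x)
  (hmu : 0 < mu)
  (hM : is_moreau_env f g mu M) :
  (convex M /\ L_smooth M (L / mu) Ns) /\
  (forall x, (1 + mu / ucs^2) * M x <= f x /\ f x <= (1 + mu / lcs^2) * M x) /\
  (exists NM : vec d -> R, is_norm NM /\ forall x, M x = / 2 * (NM x)^2).
Proof.
have M_ge0 := moreau_ge0 hf hg hmu hM.
have M_convex := moreau_convex hNc hNs hf hg hmu hM.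
have [_ [Gg [hGg g_model]]] := hgL.
have M_model := moreau_upper_model hmu hM g_model.
set GM := fun x => vscale (/ mu) (Gg (vsub x (moreau_argmin hM x))).
have M_grad : is_gradient M GM.
  apply: (@gradient_of_convex_upper_model _ M (fun v => L / mu * g v)) => //.
  - by move=> x y /=; rewrite /GM hg; have := M_model x y; lra.
  - by move=> v; rewrite !hg norm_opp.
  apply: littleo_scale; apply: (littleo_of_even_gradient hGg).
  - by rewrite hg norm_zero //; ring.
  - by move=> v; rewrite !hg norm_opp.
  - exact: g_ge0 hg.
split; first by do !split=> //; exists GM.
split.
  move=> x; split.
  - by apply: (moreau_le_f hNc hNs hf hg hmu hM) => [|y]; [lra | case: (hcs y)].
  - by apply: (f_le_moreau hNc hf hg hmu hM) => [|y]; [lra | case: (hcs y)].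
exists (gauge M); split; last exact: half_sq_gauge M_ge0.
apply: is_norm_gauge M_ge0 M_convex _ _.
- exact: moreau_scale hNc hNs hf hg hmu hM.
- exact: moreau_definite hNc hNs hf hg hmu hM.
Qed.
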